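(* Let $V, K$ be positive integers, let $\boldsymbol\epsilon \in [0,1]^V$, and let $R$ be a finite set of rays with $|R| \ge K$, each ray $j\in R$ having a vector $\mathbf p_j=(p_{ij})_{i=1}^V \in [0,1]^V$. Run the greedy algorithm on $R$ for $K$ iterations: set $\mathbf b^0=\boldsymbol\epsilon$ and $A_0=R$; at iteration $t=1,\dots,K$ choose $j_t \in \arg\min_{j\in A_{t-1}} \sum_{i} b^{t-1}_i p_{ij}$ (ties broken arbitrarily), set $\mathbf b^t = \mathbf b^{t-1}\odot \mathbf p_{j_t}$ (coordinatewise product) and $A_t = A_{t-1}\setminus\{j_t\}$. Let $f^t=\sum_{i=1}^V b^t_i$, $E=\sum_{i=1}^V \epsilon_i$, and $$\mathrm{OPT} = \min_{S\subseteq R,\ |S|=K}\ \sum_{i=1}^V \prod_{j\in S} p_{ij}.$$ Then $$f^K \le \frac{E}{e} + \mathrm{OPT}\Big(1-\frac{1}{e}\Big),$$ where $e$ is Euler's number.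
   Context: Here $\epsilon_i$ models the expected reconstruction loss in voxel $i$ and $p_{ij}$ the probability that voxel $i$ is not covered by ray $j$; this is the single-position case ($L=1$) of the ray-planning problem. *)

From Stdlib Require Import Reals List.
Open Scope R_scope.

(* Voxels are indexed 0..V-1, rays are indexed 0..N-1 (the ray set R, |R| = N).
   p i j = p_{ij}, eps i = epsilon_i. *)

Fixpoint rsum (n : nat) (f : nat -> R) : R :=
  match n with
  | O => 0
  | S m => rsum m f + f m
  end.

Definition prodl (p : nat -> nat -> R) (s : list nat) (i : nat) : R :=
  fold_right (fun j acc => p i j * acc) 1 s.

Definition setval (V : nat) (p : nat -> nat -> R) (s : list nat) : R :=
  rsum V (fun i => prodl p s i).

Definition admissible (N K : nat) (s : list nat) : Prop :=
  NoDup s /\ length s = K /\ (forall j, In j s -> (j < N)%nat).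

(* greedy state b^t (t = number of rays chosen so far, js = j_1,...,j_K) *)
Definition bstate (eps : nat -> R) (p : nat -> nat -> R) (js : list nat)
  (t : nat) (i : nat) : R :=
  eps i * prodl p (firstn t js) i.

Definition gcost (V : nat) (eps : nat -> R) (p : nat -> nat -> R) (js : list nat)
  (t j : nat) : R :=
  rsum V (fun i => bstate eps p js t i * p i j).

(* js is a possible run (any tie-breaking) of the greedy algorithm for K
   iterations: the (t+1)-th chosen ray nth t js lies in A_t = R \ {j_1..j_t}
   and minimises the cost over A_t. *)
Definition greedy_run (V N K : nat) (eps : nat -> R) (p : nat -> nat -> R)
  (js : list nat) : Prop :=
  length js = K /\
  forall t, (t < K)%nat ->
    (nth t js 0%nat < N)%nat /\ ~ In (nth t js 0%nat) (firstn t js) /\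
    forall j, (j < N)%nat -> ~ In j (firstn t js) ->
      gcost V eps p js t (nth t js 0%nat) <= gcost V eps p js t j.

(* Fix a step t < K and an optimal set S.  The rays of S not yet chosen, T, satisfy
   sum_i b^t_i prod_{j in T} p_ij <= OPT, since the chosen rays of S only
   shrink the product and eps <= 1.  Each j in T would remove at most the gain
   f^t - f^(t+1) of the greedy choice, and 1 - prod_T p <= sum_T (1 - p), so
   f^t - OPT <= |T| (f^t - f^(t+1)) <= K (f^t - f^(t+1)).  Hence
   f^(t+1) - OPT <= (1 - 1/K) (f^t - OPT), and (1 - 1/K)^K <= 1/e. *)

From Stdlib Require Import Reals List Lra Lia.
Open Scope R_scope.

Lemma rsum_plus n f g : rsum n (fun i => f i + g i) = rsum n f + rsum n g.
Proof. induction n; simpl; [ring | rewrite IHn; ring]. Qed.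

Lemma rsum_minus n f g : rsum n (fun i => f i - g i) = rsum n f - rsum n g.
Proof. induction n; simpl; [ring | rewrite IHn; ring]. Qed.

Lemma rsum_le n f g :
  (forall i, (i < n)%nat -> f i <= g i) -> rsum n f <= rsum n g.
Proof.
  induction n; intros H; simpl; [lra|].
  assert (rsum n f <= rsum n g) by (apply IHn; intros; apply H; lia).
  assert (f n <= g n) by (apply H; lia).
  lra.
Qed.

Lemma rsum_nonneg n f : (forall i, (i < n)%nat -> 0 <= f i) -> 0 <= rsum n f.
Proof.
  induction n; intros H; simpl; [lra|].
  assert (0 <= rsum n f) by (apply IHn; intros; apply H; lia).
  assert (0 <= f n) by (apply H; lia).
  lra.
Qed.

Lemma rsum_ext n f g :
  (forall i, (i < n)%nat -> f i = g i) -> rsum n f = rsum n g.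
Proof.
  intros H; apply Rle_antisym; apply rsum_le; intros i Hi; rewrite H by lia; lra.
Qed.

Definition lsum (l : list nat) (g : nat -> R) : R :=
  fold_right (fun j acc => g j + acc) 0 l.

Lemma lsum_scal l g c : c * lsum l g = lsum l (fun j => c * g j).
Proof. induction l; simpl; [ring | rewrite <- IHl; ring]. Qed.

Lemma rsum_lsum n l h :
  rsum n (fun i => lsum l (h i)) = lsum l (fun j => rsum n (fun i => h i j)).
Proof.
  induction l as [|a l IH]; simpl.
  - induction n; simpl; [ring | rewrite IHn; ring].
  - rewrite rsum_plus, IH. reflexivity.
Qed.

Lemma lsum_le_length_mul l g c :
  (forall j, In j l -> g j <= c) -> lsum l g <= INR (length l) * c.
Proof.
  induction l as [|a l IH]; intros H; [simpl; lra|].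
  cbn [length lsum fold_right]; rewrite S_INR; fold (lsum l g).
  assert (lsum l g <= INR (length l) * c) by (apply IH; intros; apply H; right; auto).
  assert (g a <= c) by (apply H; left; auto).
  lra.
Qed.

Section ProductsOverRays.

Variables (p : nat -> nat -> R) (i : nat).

Lemma prodl_cons a l : prodl p (a :: l) i = p i a * prodl p l i.
Proof. reflexivity. Qed.

Lemma prodl_app a b : prodl p (a ++ b) i = prodl p a i * prodl p b i.
Proof. induction a; unfold prodl in *; simpl; [ring | rewrite IHa; ring]. Qed.

Lemma prodl_bounds l :
  (forall j, In j l -> 0 <= p i j <= 1) -> 0 <= prodl p l i <= 1.
Proof.
  induction l as [|a l IH]; intros H; [unfold prodl; simpl; lra|].
  rewrite prodl_cons.
  assert (Ha := H a (or_introl eq_refl)).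
  assert (0 <= prodl p l i <= 1) by (apply IH; intros; apply H; right; auto).
  nra.
Qed.

(* The union bound for the events "voxel i is covered by ray j". *)
Lemma one_minus_prodl_le l :
  (forall j, In j l -> 0 <= p i j <= 1) ->
  1 - prodl p l i <= lsum l (fun j => 1 - p i j).
Proof.
  induction l as [|a l IH]; intros H; [unfold prodl; simpl; lra|].
  rewrite prodl_cons; simpl.
  assert (Ha := H a (or_introl eq_refl)).
  assert (Hl : forall j, In j l -> 0 <= p i j <= 1) by (intros; apply H; right; auto).
  pose proof (IH Hl); pose proof (prodl_bounds l Hl).
  nra.
Qed.

Lemma prodl_remove U c : NoDup U -> In c U ->
  prodl p U i = p i c * prodl p (remove Nat.eq_dec c U) i.
Proof.
  induction U as [|u U IH]; intros ND Hin; [destruct Hin|].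
  inversion ND; subst; simpl remove.
  destruct (Nat.eq_dec c u) as [->|ne].
  - rewrite notin_remove by auto. reflexivity.
  - destruct Hin as [->|Hin]; [congruence|].
    rewrite !prodl_cons, IH by auto. ring.
Qed.

Lemma NoDup_remove_nat (U : list nat) c : NoDup U -> NoDup (remove Nat.eq_dec c U).
Proof.
  induction U as [|u U IH]; intros ND; simpl; [constructor|].
  inversion ND; subst; destruct (Nat.eq_dec c u); auto.
  constructor; auto. intros H. apply in_remove in H. tauto.
Qed.

Lemma prodl_le_incl U C : NoDup U -> incl U C ->
  (forall j, In j C -> 0 <= p i j <= 1) -> prodl p C i <= prodl p U i.
Proof.
  revert U; induction C as [|c C IH]; intros U ND HUC Hp.
  - destruct U as [|u U]; [unfold prodl; simpl; lra|].
    exfalso; apply (HUC u); left; auto.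
  - assert (Hc := Hp c (or_introl eq_refl)).
    assert (HpC : forall j, In j C -> 0 <= p i j <= 1) by (intros; apply Hp; right; auto).
    pose proof (prodl_bounds C HpC).
    rewrite prodl_cons.
    destruct (in_dec Nat.eq_dec c U) as [Hin|Hnin].
    + rewrite (prodl_remove U c ND Hin).
      assert (prodl p C i <= prodl p (remove Nat.eq_dec c U) i).
      { apply IH; auto using NoDup_remove_nat.
        intros x Hx; apply in_remove in Hx; destruct Hx as [Hx ne].
        destruct (HUC x Hx) as [->|]; [congruence | auto]. }
      nra.
    + assert (prodl p C i <= prodl p U i).
      { apply IH; auto.
        intros x Hx; destruct (HUC x Hx) as [->|]; [contradiction | auto]. }
      nra.
Qed.

Lemma prodl_filter f l :
  prodl p l i = prodl p (filter f l) i * prodl p (filter (fun x => negb (f x)) l) i.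
Proof.
  induction l as [|a l IH]; [unfold prodl; simpl; ring|].
  simpl filter; destruct (f a); simpl negb;
    rewrite !prodl_cons, IH; ring.
Qed.

End ProductsOverRays.

Lemma firstn_S_nth (l : list nat) t : (t < length l)%nat ->
  firstn (S t) l = firstn t l ++ nth t l 0%nat :: nil.
Proof.
  revert t; induction l as [|a l IH]; intros t H; simpl in *; [lia|].
  destruct t; [reflexivity|]. simpl. rewrite (IH t) by lia. reflexivity.
Qed.

Definition memb (C : list nat) (j : nat) : bool :=
  if in_dec Nat.eq_dec j C then true else false.

Section GreedyStep.

Variables (V N K : nat) (eps : nat -> R) (p : nat -> nat -> R) (js : list nat).
Hypothesis eps_bounds : forall i, (i < V)%nat -> 0 <= eps i <= 1.
Hypothesis p_bounds : forall i j, (i < V)%nat -> (j < N)%nat -> 0 <= p i j <= 1.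
Hypothesis run : greedy_run V N K eps p js.

Let f t := rsum V (fun i => bstate eps p js t i).

Lemma greedy_chosen_lt j : In j js -> (j < N)%nat.
Proof.
  destruct run as [Hlen Hgr]; intros Hj.
  destruct (In_nth js j 0%nat Hj) as [n [Hn <-]].
  apply (Hgr n); lia.
Qed.

Lemma p_bounds_chosen t i : (i < V)%nat ->
  forall j, In j (firstn t js) -> 0 <= p i j <= 1.
Proof.
  intros Hi j Hj; apply p_bounds; auto; apply greedy_chosen_lt.
  rewrite <- (firstn_skipn t js); apply in_or_app; left; auto.
Qed.

Lemma bstate_bounds t i : (i < V)%nat -> 0 <= bstate eps p js t i <= eps i.
Proof.
  intros Hi; unfold bstate.
  pose proof (prodl_bounds p i _ (p_bounds_chosen t i Hi)).
  pose proof (eps_bounds i Hi).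
  nra.
Qed.

Lemma greedy_value_S t : (t < K)%nat ->
  f (S t) = gcost V eps p js t (nth t js 0%nat).
Proof.
  intros Ht; apply rsum_ext; intros i Hi; unfold bstate.
  rewrite firstn_S_nth by (destruct run; lia).
  rewrite prodl_app; unfold prodl at 2; simpl; ring.
Qed.

Lemma gcost_complement t j :
  rsum V (fun i => bstate eps p js t i * (1 - p i j)) = f t - gcost V eps p js t j.
Proof. unfold f, gcost; rewrite <- rsum_minus; apply rsum_ext; intros; ring. Qed.

(* Every unchosen ray removes at most the greedy gain f^t - f^(t+1). *)
Lemma unchosen_loss_le t T : (t < K)%nat ->
  (forall j, In j T -> (j < N)%nat /\ ~ In j (firstn t js)) ->
  f t - rsum V (fun i => bstate eps p js t i * prodl p T i)
    <= INR (length T) * (f t - f (S t)).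
Proof.
  intros Ht HT; destruct run as [_ Hgr].
  destruct (Hgr t Ht) as [_ [_ Hmin]].
  unfold f at 1; rewrite <- rsum_minus.
  apply Rle_trans with
    (rsum V (fun i => lsum T (fun j => bstate eps p js t i * (1 - p i j)))).
  - apply rsum_le; intros i Hi; rewrite <- lsum_scal.
    pose proof (one_minus_prodl_le p i T (fun j Hj => p_bounds i j Hi (proj1 (HT j Hj)))).
    pose proof (bstate_bounds t i Hi).
    nra.
  - rewrite rsum_lsum; apply lsum_le_length_mul; intros j Hj.
    destruct (HT j Hj) as [HjN HjC].
    rewrite gcost_complement, greedy_value_S by exact Ht.
    pose proof (Hmin j HjN HjC); lra.
Qed.

Lemma unchosen_part_le_setval t s : admissible N K s ->
  rsum V (fun i => bstate eps p js t i
                   * prodl p (filter (fun j => negb (memb (firstn t js) j)) s) i)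
    <= setval V p s.
Proof.
  intros [SND [_ Sin]]; apply rsum_le; intros i Hi.
  set (C := firstn t js).
  rewrite (prodl_filter p i (memb C) s).
  set (T := filter (fun j => negb (memb C j)) s).
  set (U := filter (memb C) s).
  assert (HU : prodl p C i <= prodl p U i).
  { apply prodl_le_incl.
    - apply NoDup_filter; auto.
    - intros x Hx; apply filter_In in Hx; destruct Hx as [_ Hx].
      unfold memb in Hx; destruct (in_dec Nat.eq_dec x C); auto; discriminate.
    - apply p_bounds_chosen; auto. }
  assert (0 <= prodl p T i).
  { apply prodl_bounds; intros j Hj; apply p_bounds; auto.
    apply Sin; unfold T in Hj; apply filter_In in Hj; tauto. }
  pose proof (prodl_bounds p i C (p_bounds_chosen t i Hi)).
  pose proof (eps_bounds i Hi).
  unfold bstate; fold C.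
  apply Rmult_le_compat_r; nra.
Qed.

Lemma greedy_step t s OPT : (t < K)%nat ->
  admissible N K s -> setval V p s = OPT ->
  f (S t) - OPT <= (1 - 1 / INR K) * (f t - OPT).
Proof.
  intros Ht HS HOPT.
  set (C := firstn t js).
  set (T := filter (fun j => negb (memb C j)) s).
  assert (HT : forall j, In j T -> (j < N)%nat /\ ~ In j C).
  { intros j Hj; apply filter_In in Hj; destruct Hj as [Hj Hn].
    destruct HS as [_ [_ Sin]]; split; auto.
    unfold memb in Hn; destruct (in_dec Nat.eq_dec j C); simpl in Hn; auto; discriminate. }
  assert (Hgain : 0 <= f t - f (S t)).
  { rewrite greedy_value_S, <- gcost_complement by exact Ht.
    destruct run as [_ Hgr]; destruct (Hgr t Ht) as [HjN _].
    apply rsum_nonneg; intros i Hi.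
    pose proof (bstate_bounds t i Hi); pose proof (p_bounds i _ Hi HjN); nra. }
  assert (HlenT : INR (length T) <= INR K).
  { apply le_INR; destruct HS as [_ [HlenS _]]; rewrite <- HlenS; apply filter_length_le. }
  pose proof (unchosen_loss_le t T Ht HT).
  pose proof (unchosen_part_le_setval t s HS) as Hopt; fold C T in Hopt.
  assert (HK : 1 <= INR K) by (apply (le_INR 1); lia).
  apply (Rmult_le_reg_l (INR K)); [lra|].
  replace (INR K * ((1 - 1 / INR K) * (f t - OPT))) with ((INR K - 1) * (f t - OPT))
    by (field; lra).
  nra.
Qed.

End GreedyStep.

Lemma geometric_decay (f : nat -> R) (O q : R) (K : nat) : 0 <= q ->
  (forall t, (t < K)%nat -> f (S t) - O <= q * (f t - O)) ->
  f K - O <= q ^ K * (f 0%nat - O).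
Proof.
  intros Hq Hstep.
  assert (H : forall t, (t <= K)%nat -> f t - O <= q ^ t * (f 0%nat - O)).
  { induction t as [|t IH]; intros Ht; simpl pow; [lra|].
    pose proof (Hstep t ltac:(lia)).
    pose proof (Rmult_le_compat_l q _ _ Hq (IH ltac:(lia))).
    lra. }
  exact (H K (le_n K)).
Qed.

Lemma exp_pow x n : exp x ^ n = exp (INR n * x).
Proof.
  induction n; simpl pow.
  - rewrite Rmult_0_l, exp_0; reflexivity.
  - rewrite IHn, S_INR, <- exp_plus; f_equal; ring.
Qed.

Lemma one_minus_inv_pow_le_inv_e (K : nat) : (0 < K)%nat ->
  0 <= 1 - 1 / INR K /\ (1 - 1 / INR K) ^ K <= / exp 1.
Proof.
  intros HK.
  assert (HK1 : 1 <= INR K) by (apply (le_INR 1); lia).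
  assert (H0 : 0 <= 1 - 1 / INR K).
  { assert (1 / INR K <= 1).
    { unfold Rdiv; rewrite Rmult_1_l, <- Rinv_1; apply Rinv_le_contravar; lra. }
    lra. }
  split; [exact H0|].
  (* 1 - x <= exp (-x) with x = 1/K *)
  rewrite <- exp_Ropp.
  replace (- (1)) with (INR K * - (1 / INR K)) by (field; lra).
  rewrite <- exp_pow; apply pow_incr; split; [exact H0|].
  pose proof (exp_ineq1_le (- (1 / INR K))); lra.
Qed.

Lemma interpolation_bound (E O fK q c : R) :
  0 <= q <= c -> c <= 1 -> fK <= E -> fK - O <= q * (E - O) ->
  fK <= E * c + O * (1 - c).
Proof.
  intros Hq Hc HE Hdecay.
  destruct (Rle_lt_dec E O); nra.
Qed.

Theorem theorem1 (V K N : nat) (eps : nat -> R) (p : nat -> nat -> R)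
  (js : list nat) (OPT : R) :
  (0 < V)%nat -> (0 < K)%nat -> (K <= N)%nat ->
  (forall i, (i < V)%nat -> 0 <= eps i <= 1) ->
  (forall i j, (i < V)%nat -> (j < N)%nat -> 0 <= p i j <= 1) ->
  greedy_run V N K eps p js ->
  (exists S, admissible N K S /\ setval V p S = OPT) ->
  (forall S, admissible N K S -> OPT <= setval V p S) ->
  rsum V (fun i => bstate eps p js K i)
    <= rsum V eps / exp 1 + OPT * (1 - 1 / exp 1).
Proof.
  intros _ HK _ Heps Hp Hrun [S [HS HOPT]] _.
  set (f := fun t => rsum V (fun i => bstate eps p js t i)).
  assert (Hf0 : f 0%nat = rsum V eps).
  { apply rsum_ext; intros i _; unfold bstate, prodl; simpl; ring. }
  assert (HfK : f K <= rsum V eps).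
  { apply rsum_le; intros i Hi; apply (bstate_bounds V N K eps p js Heps Hp Hrun K i Hi). }
  destruct (one_minus_inv_pow_le_inv_e K HK) as [Hq0 HqK].
  pose proof (geometric_decay f OPT _ K Hq0
                (fun t Ht => greedy_step V N K eps p js Heps Hp Hrun t S OPT Ht HS HOPT))
    as Hdecay.
  rewrite Hf0 in Hdecay.
  assert (He : 1 < exp 1) by (pose proof (exp_ineq1_le 1); lra).
  assert (Hinv : 0 < / exp 1 < 1).
  { split; [apply Rinv_0_lt_compat; lra|].
    apply (Rmult_lt_reg_l (exp 1)); [lra|]; rewrite Rinv_r; lra. }
  unfold Rdiv; rewrite Rmult_1_l.
  apply (interpolation_bound _ _ _ ((1 - 1 / INR K) ^ K)).
  - split; [apply pow_le|]; assumption.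
  - lra.
  - exact HfK.
  - exact Hdecay.
Qed.
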